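(* Let $p,q$ be integers with $q\geqslant p>2$ and $p+q=n$, and let $T$ be an $n$-vertex tree whose vertex bipartition has parts of sizes $p$ and $q$. Then $\xi^{ee}(T)\leqslant\frac{5n-4}{6}$, with equality if and only if $T\cong P_2(p-1,q-1)$.
   Context: For a vertex $x$ of a connected graph $G$, $\varepsilon_G(x)$ is its eccentricity and $d_G(x)$ its degree; $\xi^{ee}(G)=\sum_{uv\in E(G)}\left(\frac{1}{\varepsilon_G(u)}+\frac{1}{\varepsilon_G(v)}\right)=\sum_{x}\frac{d_G(x)}{\varepsilon_G(x)}$. A tree has a $(p,q)$-bipartition if its vertex set splits into two independent sets of sizes $p$ and $q$. $P_2(a,b)$ is the tree on $a+b+2$ vertices obtained from an edge $xy$ by attaching $a$ pendant vertices to $x$ and $b$ pendant vertices to $y$. *)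

From mathcomp Require Import all_boot all_order all_algebra.
Set Implicit Arguments. Unset Strict Implicit. Unset Printing Implicit Defensive.
Import Order.TTheory GRing.Theory Num.Theory.

Section Graphs.
Variable T : finType.
Variable e : rel T.

Definition simple_graph := symmetric e /\ irreflexive e.

Fixpoint ball (k : nat) (x : T) : {set T} :=
  if k is k'.+1 then ball k' x :|: [set y | [exists z in ball k' x, e z y]]
  else [set x].

(* distance: least k < #|T| with y in ball k x (well-defined for connected graphs) *)
Definition dist (x y : T) : nat := find (fun k => y \in ball k x) (iota 0 #|T|).

Definition ecc (x : T) : nat := \max_(y : T) dist x y.

Definition deg (x : T) : nat := #|[set y | e x y]|.

Definition connected_graph := forall x y : T, connect e x y.

Definition nedges : nat := #|[set pr : T * T | e pr.1 pr.2]|./2.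

Definition is_tree := simple_graph /\ connected_graph /\ nedges = #|T| - 1.

Definition has_bipartition (p q : nat) :=
  exists A : {set T}, [/\ #|A| = p, #|~: A| = q &
    forall u v, e u v -> (u \in A) != (v \in A)].

Definition xi_ee : rat := \sum_(x : T) ((deg x)%:R / (ecc x)%:R)%R.
End Graphs.

(* P_2(a,b) on vertices 'I_(a+b+2): 0 = x, 1 = y, 2..a+1 pendant at x,
   a+2..a+b+1 pendant at y *)
Definition P2_base (a b : nat) (i j : 'I_(a + b + 2)) : bool :=
  [|| (val i == 0) && (val j == 1),
      (val i == 0) && (2 <= val j < a + 2) |
      (val i == 1) && (a + 2 <= val j)].

Definition P2 (a b : nat) : rel 'I_(a + b + 2) :=
  fun i j => P2_base i j || P2_base j i.

Definition graph_iso (T1 T2 : finType) (e1 : rel T1) (e2 : rel T2) :=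
  exists f : T1 -> T2, bijective f /\ forall u v, e1 u v = e2 (f u) (f v).

Arguments P2_base a b i j : clear implicits.
Arguments P2 a b : clear implicits.

(* Both sides of the bipartition have at least two vertices, so every vertex
   has eccentricity at least 2, and [xi_ee] is the sum over edges [uv] of
   [1/ecc u + 1/ecc v]. If no edge joins two vertices of eccentricity 2, each
   of the [n - 1] edges contributes at most [1/2 + 1/3 = 5/6], so
   [xi_ee <= 5(n-1)/6 < (5n-4)/6]. If some edge [uv] does, every vertex is
   adjacent to [u] or [v]; counting degrees in the tree shows that all other
   vertices are leaves of eccentricity 3, so the tree is the double star
   [P2 (p - 1) (q - 1)] and [xi_ee = n/2 + (n - 2)/3 = (5n - 4)/6]. *)

From mathcomp Require Import all_boot all_order all_algebra.
From mathcomp Require Import zify ring lra.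
Import Order.TTheory GRing.Theory Num.Theory.
Set Implicit Arguments. Unset Strict Implicit. Unset Printing Implicit Defensive.

Section Balls.
Variables (T : finType) (e : rel T).

Lemma ballS k x y :
  (y \in ball e k.+1 x) = (y \in ball e k x) || [exists z in ball e k x, e z y].
Proof. by rewrite /= in_setU inE. Qed.

Lemma ball1 x y : (y \in ball e 1 x) = (y == x) || e x y.
Proof.
rewrite ballS /= inE; congr (_ || _).
apply/existsP/idP => [[z /andP [/set1P -> //]]|exy].
by exists x; rewrite inE eqxx.
Qed.

Lemma subset_ball k m x : k <= m -> ball e k x \subset ball e m x.
Proof.
elim: m => [|m IHm]; first by rewrite leqn0 => /eqP ->.
rewrite leq_eqVlt => /orP [/eqP -> //| lt_km].
apply: subset_trans (IHm lt_km) _; apply/subsetP => y y_in.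
by rewrite ballS y_in.
Qed.

Lemma mem_ball_le k m x y : k <= m -> y \in ball e k x -> y \in ball e m x.
Proof. by move/(subset_ball x)/subsetP; apply. Qed.

Lemma mem_ball_edge k x y z : y \in ball e k x -> e y z -> z \in ball e k.+1 x.
Proof.
by move=> y_in eyz; rewrite ballS; apply/orP; right; apply/existsP; exists y; rewrite y_in.
Qed.

(* [dist] only searches the radii below [#|T|], hence the bound on [k]. *)
Lemma mem_ball_dist k x y : dist e x y <= k -> k < #|T| -> y \in ball e k x.
Proof.
move=> le_dk lt_kT.
have lt_dT : dist e x y < size (iota 0 #|T|) by rewrite size_iota; lia.
have := nth_find 0 (a := fun k => y \in ball e k x) (s := iota 0 #|T|).
rewrite has_find -/(dist e x y) => /(_ lt_dT).
rewrite nth_iota ?add0n; last by rewrite size_iota in lt_dT.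
exact: mem_ball_le.
Qed.

Lemma dist_le_ball k x y : y \in ball e k x -> k < #|T| -> dist e x y <= k.
Proof.
move=> y_in lt_kT; rewrite leqNgt; apply/negP => lt_kd.
have := before_find 0 (a := fun k => y \in ball e k x) (s := iota 0 #|T|) lt_kd.
by rewrite nth_iota ?add0n ?y_in.
Qed.

Lemma mem_ball_ecc k x y : ecc e x <= k -> k < #|T| -> y \in ball e k x.
Proof. by move=> le_ek; apply: mem_ball_dist; apply: leq_trans le_ek; apply: leq_bigmax. Qed.

Lemma ecc_le_ball k x : k < #|T| -> (forall y, y \in ball e k x) -> ecc e x <= k.
Proof. by move=> lt_kT ball_full; apply/bigmax_leqP => y _; apply: dist_le_ball. Qed.

Lemma ecc_le_cover k x u v : k.+1 < #|T| ->
  u \in ball e k x -> v \in ball e k x -> (forall y, e u y || e v y) ->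
  ecc e x <= k.+1.
Proof.
move=> lt_kT u_in v_in cover; apply: ecc_le_ball => // y.
by case/orP: (cover y); apply: mem_ball_edge.
Qed.

End Balls.

Definition central_edge (T : finType) (e : rel T) (u v : T) : bool :=
  [&& e u v, ecc e u <= 2 & ecc e v <= 2].

Section Handshake.
Variables (T : finType) (e : rel T).
Hypotheses (e_sym : symmetric e) (e_irr : irreflexive e).

Lemma degE x : deg e x = \sum_y e x y.
Proof. by rewrite /deg -sum1dep_card big_mkcond. Qed.

Lemma card_edge_pairs : #|[set pr : T * T | e pr.1 pr.2]| = \sum_x \sum_y e x y.
Proof. by rewrite -sum1dep_card big_mkcond /= pair_big /=; apply: eq_bigr => -[]. Qed.

(* Each edge is counted once from each end; [enum_rank] orients it. *)
Lemma sum_adj_double :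
  \sum_x \sum_y e x y = (\sum_x \sum_y (e x y && (enum_rank x < enum_rank y))).*2.
Proof.
have split_edge x y : e x y = (e x y && (enum_rank x < enum_rank y))
                             + (e y x && (enum_rank y < enum_rank x)) :> nat.
  rewrite (e_sym y x); case exy: (e x y) => //=.
  have : enum_rank x != enum_rank y.
    by apply: contraTneq exy => /enum_rank_inj ->; rewrite e_irr.
  by rewrite neq_ltn; case: ltngtP.
under eq_bigr => x _ do under eq_bigr => y _ do rewrite split_edge.
under eq_bigr => x _ do rewrite big_split /=.
by rewrite big_split /= [X in (_ + X)%N]exchange_big addnn.
Qed.

Lemma sum_deg : \sum_x deg e x = (nedges e).*2.
Proof.
under eq_bigr => x _ do rewrite degE.
by rewrite /nedges card_edge_pairs sum_adj_double doubleK.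
Qed.

End Handshake.

Section EdgeSum.
Local Open Scope ring_scope.
Variables (T : finType) (e : rel T).
Hypothesis e_sym : symmetric e.

Lemma xi_ee_edge_sum :
  xi_ee e *+ 2 = \sum_x \sum_y (e x y)%:R * ((ecc e x)%:R^-1 + (ecc e y)%:R^-1).
Proof.
have xi_left : xi_ee e = \sum_x \sum_y (e x y)%:R * (ecc e x)%:R^-1.
  by apply: eq_bigr => x _; rewrite degE natr_sum mulr_suml.
have xi_right : xi_ee e = \sum_x \sum_y (e x y)%:R * (ecc e y)%:R^-1.
  by rewrite xi_left exchange_big; apply: eq_bigr => x _; apply: eq_bigr => y _; rewrite e_sym.
rewrite mulr2n {1}xi_left xi_right -big_split; apply: eq_bigr => x _.
by rewrite -big_split; apply: eq_bigr => y _; rewrite mulrDr.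
Qed.

Lemma xi_ee_le_edge_bound (c : rat) :
  (forall x y, e x y -> (ecc e x)%:R^-1 + (ecc e y)%:R^-1 <= c) ->
  xi_ee e *+ 2 <= c * (\sum_x deg e x)%:R.
Proof.
move=> edge_bound; rewrite xi_ee_edge_sum natr_sum mulr_sumr; apply: ler_sum => x _.
rewrite degE natr_sum mulr_sumr; apply: ler_sum => y _.
by case: (boolP (e x y)) => [/edge_bound|_]; rewrite ?mul1r ?mulr1 ?mul0r ?mulr0.
Qed.

Lemma inv_pair_le (k m : nat) : (2 <= k)%N -> (2 <= m)%N -> (3 <= maxn k m)%N ->
  (k%:R : rat)^-1 + (m%:R)^-1 <= 5 / 6.
Proof.
have inv_le (i j : nat) : (0 < i)%N -> (i <= j)%N -> (j%:R : rat)^-1 <= (i%:R)^-1.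
  by move=> i_gt0 le_ij; rewrite lef_pV2 ?posrE ?ltr0n ?ler_nat //; lia.
move=> k_ge2 m_ge2; have := inv_le 2%N _ isT k_ge2; have := inv_le 2%N _ isT m_ge2.
case: (leqP k 2) => [le_k2|lt_2k] ? ? max_ge3.
  have m_ge3 : (3 <= m)%N by lia.
  by have := inv_le 3%N _ isT m_ge3; lra.
by have := inv_le 3%N _ isT lt_2k; lra.
Qed.

Lemma xi_ee_lt_no_central_edge :
  (0 < #|T|)%N -> (\sum_x deg e x = (#|T| - 1).*2)%N ->
  (forall x, 2 <= ecc e x)%N -> (forall x y, ~~ central_edge e x y) ->
  xi_ee e < (5 * #|T|%:R - 4) / 6.
Proof.
move=> T_gt0 sum_degE ecc_ge2 no_central.
have far_edge x y : e x y -> (3 <= maxn (ecc e x) (ecc e y))%N.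
  by move=> exy; move: (no_central x y); rewrite /central_edge exy /=; lia.
have := xi_ee_le_edge_bound (c := 5 / 6) (fun x y exy =>
  inv_pair_le (ecc_ge2 x) (ecc_ge2 y) (far_edge x y exy)).
by rewrite sum_degE -mul2n natrM natrB // mulr2n; lra.
Qed.

End EdgeSum.

Section Bipartite.
Variables (T : finType) (e : rel T) (A : {set T}).
Hypothesis bip : forall u v, e u v -> (u \in A) != (v \in A).

Lemma edge_side u v : e u v -> (v \in A) = ~~ (u \in A).
Proof. by move/bip; case: (u \in A); case: (v \in A). Qed.

Lemma ball2_side x y : y \in ball e 2 x -> e x y || ((y \in A) == (x \in A)).
Proof.
rewrite ballS ball1 => /orP [/orP [/eqP -> | -> //] | ]; first by rewrite eqxx orbT.
case/existsP => z /andP []; rewrite ball1 => /orP [/eqP -> -> // | exz ezy].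
by rewrite (edge_side ezy) (edge_side exz) negbK eqxx orbT.
Qed.

Lemma ecc_ge2 x y : y != x -> (y \in A) = (x \in A) -> (2 <= ecc e x)%N.
Proof.
move=> neq_yx same_side; rewrite ltnNge; apply/negP => le_ecc1.
have T_gt1 : (1 < #|T|)%N by apply/card_gt1P; exists x, y; rewrite eq_sym.
move: (mem_ball_ecc y le_ecc1 T_gt1); rewrite ball1 (negbTE neq_yx) /=.
by move/edge_side; rewrite same_side; case: (x \in A).
Qed.

Lemma ecc_ge3_leaf w c z : (forall y, e w y = (y == c)) ->
  z != c -> (z \in A) = (c \in A) -> (3 <= ecc e w)%N.
Proof.
move=> nbr_w neq_zc same_side.
have side_c : (c \in A) = ~~ (w \in A) by apply: edge_side; rewrite nbr_w.
have T_gt2 : (2 < #|T|)%N.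
  have neq_wc : w != c.
    by apply/eqP=> eq_wc; move: side_c; rewrite eq_wc; case: (c \in A).
  have neq_zw : z != w.
    by apply/eqP=> eq_zw; move: same_side; rewrite eq_zw side_c; case: (w \in A).
  by apply/card_gt2P; exists w, c, z; rewrite neq_wc eq_sym neq_zc neq_zw.
rewrite ltnNge; apply/negP => le_ecc2.
case/orP: (ball2_side (mem_ball_ecc z le_ecc2 T_gt2)); first by rewrite nbr_w (negbTE neq_zc).
by rewrite same_side side_c; case: (w \in A).
Qed.

Hypotheses (A_gt1 : (1 < #|A|)%N) (Ac_gt1 : (1 < #|~: A|)%N).

Lemma other_on_side x : exists2 y, y != x & (y \in A) = (x \in A).
Proof.
have [y1 [y2 [y1_in y2_in neq_y]]] : exists y1 y2,
    [/\ y1 \in (if x \in A then A else ~: A), y2 \in (if x \in A then A else ~: A)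
      & y1 != y2].
  by apply/card_gt1P; case: (x \in A).
have same_side y : y \in (if x \in A then A else ~: A) -> (y \in A) = (x \in A).
  by case: (x \in A); rewrite ?inE; case: (y \in A).
have [eq_y1x | neq_y1x] := eqVneq y1 x; last by exists y1; rewrite ?same_side.
by exists y2; rewrite ?same_side // -eq_y1x eq_sym.
Qed.

End Bipartite.

(* Vertex classes of a double star: 0 and 1 are the centres, 2 and 3 the
   leaves at centre 0 and at centre 1; [star_adj] is its adjacency on classes. *)
Definition p2_kind (a i : nat) : nat := if i < 2 then i else if i < a + 2 then 2 else 3.

Definition star_adj (k l : nat) : bool :=
  [|| (k == 0) && ((l == 1) || (l == 2)), (k == 1) && ((l == 0) || (l == 3)),
      (k == 2) && (l == 0) | (k == 3) && (l == 1)].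

Lemma P2_kind a b (i j : 'I_(a + b + 2)) :
  P2 a b i j = star_adj (p2_kind a i) (p2_kind a j).
Proof.
rewrite /P2 /P2_base /star_adj /p2_kind.
case: i j => [[|[|i]] _] [[|[|j]] _] //=.
all: rewrite ?orbT //; repeat case: ifP => ? //=; rewrite ?orbF; lia.
Qed.

Section DoubleStar.
Variables (T : finType) (e : rel T) (A : {set T}) (u v : T).
Hypothesis e_sym : symmetric e.
Hypothesis bip : forall x y, e x y -> (x \in A) != (y \in A).
Hypotheses (A_gt1 : (1 < #|A|)%N) (Ac_gt1 : (1 < #|~: A|)%N).
Hypothesis sum_degE : \sum_x deg e x = (#|T| - 1).*2.
Hypotheses (euv : e u v) (u_notin_A : u \notin A) (v_in_A : v \in A).
Hypotheses (ecc_u : (ecc e u <= 2)%N) (ecc_v : (ecc e v <= 2)%N).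

Lemma neq_uv : u != v.
Proof. by apply: contraNneq u_notin_A => ->. Qed.

(* A vertex adjacent to neither [u] nor [v] is at distance 0 or 2 from both,
   so it would lie on the side of [u] and on the side of [v]. *)
Lemma central_edge_cover w : e u w || e v w.
Proof.
have T_gt2 : (2 < #|T|)%N by rewrite -(cardsC A); lia.
have := ball2_side bip (mem_ball_ecc w ecc_u T_gt2).
have := ball2_side bip (mem_ball_ecc w ecc_v T_gt2).
case: (e u w) (e v w) => [|] [|] //= /eqP -> /eqP.
by rewrite (edge_side bip euv); case: (u \in A).
Qed.

Lemma deg_gt0 w : (0 < deg e w)%N.
Proof.
apply/card_gt0P; case/orP: (central_edge_cover w) => [euw | evw].
  by exists u; rewrite inE e_sym.
by exists v; rewrite inE e_sym.
Qed.

Lemma card_T_le_deg_centres : (#|T| <= deg e u + deg e v)%N.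
Proof.
apply: leq_trans (leq_card_setU _ _); rewrite -cardsT subset_leq_card //.
by apply/subsetP => w _; rewrite !inE central_edge_cover.
Qed.

Lemma card_leaves : #|[set w | (w != u) && (w != v)]| = (#|T| - 2)%N.
Proof.
have -> : [set w | (w != u) && (w != v)] = ~: [set u; v].
  by apply/setP => w; rewrite !inE negb_or.
by have := cardsC [set u; v]; rewrite cards2 neq_uv; lia.
Qed.

(* The degree sum [2(n-1)] is attained with equality by [deg u + deg v >= n]
   together with [deg w >= 1] for the remaining [n - 2] vertices. *)
Lemma deg_tight :
  (deg e u + deg e v)%N = #|T| /\ forall w, w != u -> w != v -> deg e w = 1%N.
Proof.
pose leaf w := (w != u) && (w != v).
have sum_deg_split : \sum_x deg e x
    = (deg e u + deg e v + #|[set w | leaf w]| + \sum_(w | leaf w) (deg e w - 1))%N.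
  rewrite (bigD1 u) // (bigD1 v) 1?eq_sym ?neq_uv //= -sum1dep_card -!addnA -big_split /=.
  by do 2 congr (_ + _)%N; apply: eq_bigr => w _ /=; have := deg_gt0 w; lia.
have := card_T_le_deg_centres; have := cardsC A; move: sum_degE.
rewrite sum_deg_split card_leaves -mul2n => sum_eq card_eq deg_ge.
have excess0 : \sum_(w | leaf w) (deg e w - 1) = 0 by lia.
split; first by lia.
move=> w ne_wu ne_wv; move/eqP: excess0; rewrite sum_nat_eq0 => /forallP /(_ w).
by rewrite /leaf ne_wu ne_wv /= => /eqP; have := deg_gt0 w; lia.
Qed.

Lemma adj_u w : e u w = (w \in A).
Proof.
apply/idP/idP => [/(edge_side bip) -> // | w_in_A].
have := central_edge_cover w; case: (e u w) => //= /(edge_side bip).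
by rewrite w_in_A v_in_A.
Qed.

Lemma adj_v w : e v w = (w \notin A).
Proof.
apply/idP/idP => [/(edge_side bip) -> | w_notin_A]; first by rewrite v_in_A.
have := central_edge_cover w; rewrite orbC; case: (e v w) => //= /(edge_side bip).
by rewrite (negbTE w_notin_A) (negbTE u_notin_A).
Qed.

Lemma adj_leaf w c y : w != u -> w != v -> e w c -> e w y = (y == c).
Proof.
move=> ne_wu ne_wv ewc; have [_ /(_ w ne_wu ne_wv) /eqP/cards1P [z /setP nbr_w]] := deg_tight.
have /eqP eq_cz : c == z by rewrite -in_set1 -nbr_w inE.
by have := nbr_w y; rewrite !inE eq_cz.
Qed.

Lemma adj_leaf_A w y : w \in A -> w != v -> e w y = (y == u).
Proof.
move=> w_in_A ne_wv; apply: adj_leaf => //; last by rewrite e_sym adj_u.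
by apply: contraTneq w_in_A => ->.
Qed.

Lemma adj_leaf_Ac w y : w \notin A -> w != u -> e w y = (y == v).
Proof.
move=> w_notin_A ne_wu; apply: adj_leaf => //; last by rewrite e_sym adj_v.
by apply: contraNneq w_notin_A => ->.
Qed.

Lemma ecc_centre x : (x == u) || (x == v) -> ecc e x = 2.
Proof.
move=> x_centre; have [y ne_yx same_side] := other_on_side A_gt1 Ac_gt1 x.
have := ecc_ge2 bip ne_yx same_side.
by case/orP: x_centre => /eqP ->; lia.
Qed.

Lemma ecc_leaf w : w != u -> w != v -> ecc e w = 3.
Proof.
move=> ne_wu ne_wv.
pose c := if w \in A then u else v.
have nbr_w y : e w y = (y == c).
  by rewrite /c; case: ifP => [w_in_A | /negbT w_notin_A];
    [exact: adj_leaf_A | exact: adj_leaf_Ac].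
have centres_near : u \in ball e 2 w /\ v \in ball e 2 w.
  have c_near : c \in ball e 1 w by rewrite ball1 nbr_w eqxx orbT.
  rewrite /c in c_near; case: ifP c_near => _ c_near; split;
    by [apply: (mem_ball_le _ c_near) | apply: (mem_ball_edge c_near); rewrite // e_sym].
have [z ne_zc same_side] := other_on_side A_gt1 Ac_gt1 c.
have := ecc_ge3_leaf bip nbr_w ne_zc same_side.
have := ecc_le_cover (k := 2) _ centres_near.1 centres_near.2 central_edge_cover.
by rewrite -(cardsC A); lia.
Qed.

Lemma xi_ee_double_star : xi_ee e = ((5 * #|T|%:R - 4) / 6 : rat)%R.
Proof.
rewrite /xi_ee (bigD1 u) // (bigD1 v) 1?eq_sym ?neq_uv //=.
rewrite (eq_bigr (fun=> (3%:R^-1)%R)) => [|w /andP [ne_wu ne_wv]]; last first.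
  by have [_ ->] := deg_tight; rewrite ?ecc_leaf ?div1r.
have [deg_centres _] := deg_tight.
have T_ge2 : (2 <= #|T|)%N by rewrite -(cardsC A); lia.
rewrite sumr_const.
have -> : #|(fun w => (w != u) && (w != v))| = (#|T| - 2)%N.
  by rewrite -card_leaves; apply: eq_card => w; rewrite inE.
rewrite !ecc_centre ?eqxx ?orbT // -[(_ *+ (#|T| - 2))%R]mulr_natl natrB // -deg_centres natrD.
by lra.
Qed.

Definition star_kind w : nat :=
  if w == u then 0 else if w == v then 1 else if w \in A then 2 else 3.

Lemma star_kind_u : star_kind u = 0.
Proof. by rewrite /star_kind eqxx. Qed.

Lemma star_kind_v : star_kind v = 1.
Proof. by rewrite /star_kind eq_sym (negbTE neq_uv) eqxx. Qed.

Lemma star_kind_cases w :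
  [\/ w = u, w = v, [/\ w \in A, w != v & star_kind w = 2]
    | [/\ w \notin A, w != u & star_kind w = 3]].
Proof.
rewrite /star_kind.
have [-> | ne_wu] := eqVneq w u; first exact: Or41.
have [-> | ne_wv] := eqVneq w v; first exact: Or42.
by case: (boolP (w \in A)) => w_A; [apply: Or43 | apply: Or44].
Qed.

Lemma star_kindE w :
  [/\ (w == u) = (star_kind w == 0), (w == v) = (star_kind w == 1)
    , (w \in A) = (star_kind w == 1) || (star_kind w == 2)
    & (w \notin A) = (star_kind w == 0) || (star_kind w == 3)].
Proof.
case: (star_kind_cases w) => [-> | -> | [w_A ne_wv ->] | [w_Ac ne_wu ->]].
- by rewrite star_kind_u eqxx (negbTE neq_uv) (negbTE u_notin_A).
- by rewrite star_kind_v [v == u]eq_sym (negbTE neq_uv) eqxx v_in_A.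
- by rewrite (negbTE ne_wv) w_A; split=> //; apply/negbTE; apply: contraTneq w_A => ->.
- by rewrite (negbTE ne_wu) w_Ac (negbTE w_Ac); split=> //; apply/negbTE;
    apply: contraNneq w_Ac => ->.
Qed.

Lemma adj_star_kind w1 w2 : e w1 w2 = star_adj (star_kind w1) (star_kind w2).
Proof.
have [kind_u kind_v kind_A kind_Ac] := star_kindE w2.
case: (star_kind_cases w1) => [-> | -> | [w1_A ne_w1v ->] | [w1_Ac ne_w1u ->]].
- by rewrite adj_u star_kind_u kind_A /star_adj /= orbF.
- by rewrite adj_v star_kind_v kind_Ac /star_adj /= orbF.
- by rewrite (adj_leaf_A _ w1_A ne_w1v) kind_u /star_adj /= ?orbF.
- by rewrite (adj_leaf_Ac _ w1_Ac ne_w1u) kind_v /star_adj /= ?orbF.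
Qed.

(* The vertices in the numbering of [P2]: the centres, the leaves at [u]
   (the rest of [A]), then the leaves at [v]. *)
Definition star_enum : seq T := u :: v :: enum (A :\ v) ++ enum (~: A :\ u).

Lemma mem_star_enum w : w \in star_enum.
Proof.
rewrite !inE mem_cat !mem_enum !inE.
by case: (star_kind_cases w) => [-> | -> | [-> -> _] | [-> -> _]]; rewrite ?eqxx ?orbT.
Qed.

Lemma size_star_enum : size star_enum = (#|A| - 1 + (#|~: A| - 1) + 2)%N.
Proof.
rewrite /= size_cat -!cardE.
have := cardsD1 v A; have := cardsD1 u (~: A); rewrite v_in_A !inE u_notin_A /=; lia.
Qed.

Lemma p2_kind_index w : p2_kind (#|A| - 1) (index w star_enum) = star_kind w.
Proof.
have card_Av : #|A :\ v| = (#|A| - 1)%N by have := cardsD1 v A; rewrite v_in_A; lia.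
case: (star_kind_cases w) => [-> | -> | [w_A ne_wv ->] | [w_Ac ne_wu ->]].
- by rewrite /= eqxx star_kind_u.
- by rewrite /= (negbTE neq_uv) eqxx star_kind_v.
- have ne_wu : w != u by apply: contraTneq w_A => ->.
  rewrite /= eq_sym (negbTE ne_wu) eq_sym (negbTE ne_wv) index_cat mem_enum !inE ne_wv w_A.
  have : (index w (enum (A :\ v)) < #|A :\ v|)%N by rewrite cardE index_mem mem_enum !inE ne_wv.
  by rewrite /p2_kind card_Av /=; case: ifP; lia.
- have ne_wv : w != v by apply: contraNneq w_Ac => ->.
  rewrite /= eq_sym (negbTE ne_wu) eq_sym (negbTE ne_wv) index_cat mem_enum !inE ne_wv.
  by rewrite (negbTE w_Ac) /= -cardE card_Av /p2_kind; case: ifP; lia.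
Qed.

Lemma double_star_iso : graph_iso e (P2 (#|A| - 1) (#|~: A| - 1)).
Proof.
have index_lt w : (index w star_enum < #|A| - 1 + (#|~: A| - 1) + 2)%N.
  by rewrite -size_star_enum index_mem mem_star_enum.
exists (fun w => Ordinal (index_lt w)); split.
  apply: inj_card_bij => [w1 w2 eq_ord | ]; last by rewrite card_ord -(cardsC A); lia.
  have eq_index : index w1 star_enum = index w2 star_enum := congr1 val eq_ord.
  by rewrite -(nth_index w1 (mem_star_enum w1)) eq_index nth_index ?mem_star_enum.
by move=> w1 w2; rewrite P2_kind /= !p2_kind_index adj_star_kind.
Qed.

End DoubleStar.

Lemma central_edge_double_star (T : finType) (e : rel T) (A : {set T}) (u v : T) :
  symmetric e -> (forall x y, e x y -> (x \in A) != (y \in A)) ->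
  (1 < #|A|)%N -> (1 < #|~: A|)%N -> \sum_x deg e x = (#|T| - 1).*2 ->
  central_edge e u v ->
  xi_ee e = ((5 * #|T|%:R - 4) / 6)%R /\ graph_iso e (P2 (#|A| - 1) (#|~: A| - 1)).
Proof.
move=> e_sym bip A_gt1 Ac_gt1 sum_degE.
wlog v_in_A : u v / v \in A => [oriented | /and3P [euv ecc_u ecc_v]].
  case: (boolP (v \in A)) => [v_in_A | v_notin_A]; first exact: oriented.
  case/and3P=> euv ecc_u ecc_v; apply: (oriented v u).
    by rewrite -[u \in A]negbK -(edge_side bip euv).
  by rewrite /central_edge e_sym euv ecc_u ecc_v.
have u_notin_A : u \notin A by rewrite -(edge_side bip euv).
split; first exact: (xi_ee_double_star e_sym bip A_gt1 Ac_gt1 sum_degE euv).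
exact: (double_star_iso e_sym bip A_gt1 Ac_gt1 sum_degE euv).
Qed.

Lemma central_edge_of_iso (T : finType) (e : rel T) (a b : nat) :
  symmetric e -> 2 < #|T| -> graph_iso e (P2 a b) -> exists u v, central_edge e u v.
Proof.
move=> e_sym T_gt2 [f [[g fK gK] f_adj]].
have lt0 : 0 < a + b + 2 by lia.
have lt1 : 1 < a + b + 2 by lia.
pose u := g (Ordinal lt0); pose v := g (Ordinal lt1).
have euv : e u v by rewrite f_adj !gK.
have cover y : e u y || e v y.
  rewrite !f_adj !gK /P2 /P2_base /=.
  by case: (f y) => [[|[|j]] _] //=; rewrite ?orbT //; case: ltnP.
have u_near : u \in ball e 1 u by rewrite ball1 eqxx.
have v_near : v \in ball e 1 v by rewrite ball1 eqxx.
exists u, v; apply/and3P; split=> //.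
  by apply: (ecc_le_cover (u := u) (v := v)) => //; rewrite ball1 euv orbT.
apply: (ecc_le_cover (u := v) (v := u)) => //; first by rewrite ball1 e_sym euv orbT.
by move=> y; rewrite orbC.
Qed.

Local Open Scope ring_scope.

Theorem theorem4p6 (T : finType) (e : rel T) (p q n : nat) :
  is_tree e -> (2 < p)%N -> (p <= q)%N -> (p + q)%N = n -> #|T| = n ->
  has_bipartition e p q ->
  xi_ee e <= (5 * n%:R - 4) / 6 /\
  (xi_ee e = (5 * n%:R - 4) / 6 <-> graph_iso e (P2 (p - 1)%N (q - 1)%N)).
Proof.
move=> [[e_sym e_irr] [_ tree_edges]] p_gt2 le_pq <- card_T [A [card_A card_Ac bip]].
have A_gt1 : (1 < #|A|)%N by lia.
have Ac_gt1 : (1 < #|~: A|)%N by lia.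
have sum_degE : (\sum_x deg e x = (#|T| - 1).*2)%N by rewrite sum_deg // tree_edges.
rewrite -card_T -card_A -card_Ac.
have [/existsP [u /existsP [v central]] | no_central] :=
  boolP [exists u, exists v, central_edge e u v].
  have [-> iso] := central_edge_double_star e_sym bip A_gt1 Ac_gt1 sum_degE central.
  by split; [exact: lexx | split].
have ecc_ge2 x : (2 <= ecc e x)%N.
  by have [y] := other_on_side A_gt1 Ac_gt1 x; apply: ecc_ge2.
have far x y : ~~ central_edge e x y.
  by apply: contraNN no_central => central; apply/existsP; exists x; apply/existsP; exists y.
have T_gt2 : (2 < #|T|)%N by rewrite card_T; lia.
have xi_lt := xi_ee_lt_no_central_edge e_sym (ltnW (ltnW T_gt2)) sum_degE ecc_ge2 far.
split; first exact: ltW.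
split=> [xi_eq | /(central_edge_of_iso e_sym T_gt2) [u [v central]]].
  by move: xi_lt; rewrite xi_eq ltxx.
by case/negP: (far u v).
Qed.
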